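(* Let $(|B(\lambda)\rangle,\mathcal{M})$ be an $N$-regular quantum scenario. Then the $N$ measurement angles in $M_1$ are evenly spaced modulo $\pi$ with adjacent angles differing by $\frac{\pi}{N}$, and likewise for $M_2$. Consequently, up to equivalence, $M_1=\{\frac{k\pi}{N}:k=0,\dots,N-1\}$ and $M_2=\{\frac{k\pi}{N}+\mu \bmod \pi:k=0,\dots,N-1\}$ for some $\mu\in[0,\pi)$.
   Context: $\equiv$ is equality modulo $2\pi$; $\oplus$ is addition mod 2. For $\varphi\in\mathbb{R}$, $E_\varphi=\cos\varphi X+\sin\varphi Y$, with $+1$ eigenvector $|\varphi\rangle=\frac{1}{\sqrt2}(|0\rangle+e^{i\varphi}|1\rangle)$ and $-1$ eigenvector $|\varphi+\pi\rangle$; outcomes $+1,-1$ relabelled $0,1$; measurements identified with angles. A measurement scenario $\mathcal{M}=(M_1,M_2,M_3)$ consists of finite sets $M_i\subseteq[0,\pi)$ of angles for qubit $i$. For a three-qubit state $|\psi\rangle$, the event $(A,B,C)\to(a,b,c)$ is impossible if $(\langle A+a\pi|\otimes\langle B+b\pi|\otimes\langle C+c\pi|)|\psi\rangle=0$. Equivalence: $(|\psi\rangle,\mathcal{M})$ and $(|\psi'\rangle,\mathcal{M}')$ are equivalent if, after possibly permuting qubit labels, there is a local unitary $U=U_1\otimes U_2\otimes U_3$ with $U|\psi\rangle=|\psi'\rangle$ and $\{\varphi'\bmod\pi: U_iE_\varphi U_i^\dagger=\pm E_{\varphi'},\varphi\in M_i\}=M'_i$ for each $i$. For $\lambda\in[0,\frac{\pi}{2})$,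 $|v_\lambda\rangle=\cos\frac{\lambda}{2}|0\rangle+\sin\frac{\lambda}{2}|1\rangle$, $|w_\lambda\rangle=\sin\frac{\lambda}{2}|0\rangle+\cos\frac{\lambda}{2}|1\rangle$, $|B(\lambda)\rangle=\frac{1}{\sqrt2}(|00\rangle|v_\lambda\rangle+|11\rangle|w_\lambda\rangle)$. Define modulo $2\pi$: $\beta(\lambda,\varphi)=\varphi-2\arctan\left(\frac{\cos\frac{\lambda}{2}\sin\varphi}{\sin\frac{\lambda}{2}+\cos\frac{\lambda}{2}\cos\varphi}\right)$. For $|B(\lambda)\rangle$, $(A,B,C)\to(a,b,c)$ is impossible iff $A+B\equiv\beta(\lambda,C+c\pi)+(1\oplus a\oplus b)\pi$. $(|B(\lambda)\rangle,\mathcal{M})$ is maximally impossible if for every $C\in M_3$ and $z\in\{0,1\}$: every $A\in M_1$ admits $B\in M_2$, $a,b$ with $(A,B,C)\to(a,b,z)$ impossible, and every $B\in M_2$ admits $A\in M_1$, $a,b$ with $(A,B,C)\to(a,b,z)$ impossible. Then $|M_1|=|M_2|=:N$; write $M_1=\{A_0,\dots,A_{N-1}\}$, $M_2=\{B_0,\dots,B_{N-1}\}$, $M_3=\{C_0,\dots,C_{n-1}\}$; for each $(j,l,z)$ there is a unique $k=:K(j,l,z)$ with $A_j+B_k-\beta(\lambda,C_l+z\pi)$ an integer multiple of $\pi$, and $r(j,l,z)\in\{0,1\}$ is defined by $A_j+B_{K(j,l,z)}-\beta(\lambda,C_l+z\pi)\equiv r(j,l,z)\pi$. $\Psi_l(z)$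 is the $\mathbb{Z}_2$-linear system $\{a_j\oplus b_{K(j,l,z)}=r(j,l,z):j=0,\dots,N-1\}$ in unknowns $a_0,\dots,a_{N-1},b_0,\dots,b_{N-1}$. With $n=2$, maximal rank means for all $z_0,z_1$ the coefficient matrix of $\Psi_0(z_0)\cup\Psi_1(z_1)$ has rank $2N-1$ over $\mathbb{Z}_2$. $N$-regular: maximally impossible and of maximal rank, with $|M_1|=|M_2|=N$ and $M_3=\{C_0,C_1\}$. *)

From HB Require Import structures.
From mathcomp Require Import all_boot all_order all_algebra all_fingroup.
From mathcomp Require Import reals trigo.
From mathcomp Require Import complex.

Set Implicit Arguments.
Unset Strict Implicit.
Unset Printing Implicit Defensive.

Import Order.TTheory GRing.Theory Num.Theory.
Local Open Scope ring_scope.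

Section Defs.
Variable R : realType.
Local Notation C := (R[i]).

Definition modpi (x : R) : R := x - (Num.floor (x / pi))%:~R * pi.

Definition int_mul_pi (x : R) : Prop := exists k : int, x = k%:~R * pi.

(** beta(lambda, phi) = phi - 2 arctan( cos(l/2) sin phi / (sin(l/2) + cos(l/2) cos phi) )
    (mod 2pi); when the denominator vanishes the fraction is +-infinity and
    2 arctan(+-infinity) = +-pi, i.e. beta = phi - pi (mod 2 pi). *)
Definition beta (lam phi : R) : R :=
  let num := cos (lam / 2) * sin phi in
  let den := sin (lam / 2) + cos (lam / 2) * cos phi in
  if den == 0 then phi - pi else phi - 2 * atan (num / den).

Definition expi (phi : R) : C := Complex (cos phi) (sin phi).

Definition sqrt2C : C := (Num.sqrt (2 : R))%:C%C.

(** |phi> = (|0> + e^{i phi}|1>)/sqrt 2, the +1 eigenvector of E_phi *)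
Definition ket (phi : R) (x : 'I_2) : C :=
  if x == ord0 then 1 / sqrt2C else expi phi / sqrt2C.

(** E_phi = cos phi X + sin phi Y *)
Definition Emx (phi : R) : 'M[C]_2 :=
  \matrix_(i < 2, j < 2)
    (if i == j then 0 else if i == ord0 then conjc (expi phi) else expi phi).

Definition adjmx (U : 'M[C]_2) : 'M[C]_2 := map_mx conjc U^T.
Definition unitary (U : 'M[C]_2) : Prop := U *m adjmx U = 1%:M.

(** three-qubit states: amplitudes indexed by computational basis strings
    (qubit i |-> bit f i) *)
Definition state := {ffun 'I_3 -> 'I_2} -> C.

(** amplitude (<A+a pi| (x) <B+b pi| (x) <C+c pi|) |psi>, with
    ang = (A,B,C) and out = (a,b,c) *)
Definition ampl (psi : state) (ang : 'I_3 -> R) (out : 'I_3 -> bool) : C :=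
  \sum_(f : {ffun 'I_3 -> 'I_2})
     (\prod_(i < 3) conjc (ket (ang i + (out i)%:R * pi) (f i))) * psi f.

Definition angs (A B C0 : R) : 'I_3 -> R :=
  fun i => if val i == 0%N then A else if val i == 1%N then B else C0.
Definition outs (a b c : bool) : 'I_3 -> bool :=
  fun i => if val i == 0%N then a else if val i == 1%N then b else c.

Definition impossible (psi : state) (A B C0 : R) (a b c : bool) : Prop :=
  ampl psi (angs A B C0) (outs a b c) = 0.

Definition vl (lam : R) (x : 'I_2) : C :=
  if x == ord0 then (cos (lam / 2))%:C%C else (sin (lam / 2))%:C%C.
Definition wl (lam : R) (x : 'I_2) : C :=
  if x == ord0 then (sin (lam / 2))%:C%C else (cos (lam / 2))%:C%C.

Definition Bstate (lam : R) : state := fun f =>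
  (1 / sqrt2C) *
  ((if (f (inord 0) == ord0) && (f (inord 1) == ord0) then vl lam (f (inord 2)) else 0) +
   (if (f (inord 0) == ord_max) && (f (inord 1) == ord_max) then wl lam (f (inord 2)) else 0)).

(** a measurement scenario: finite sets of angles in [0, pi)
    (represented by duplicate-free lists) *)
Definition scenario (M : seq R) : Prop :=
  uniq M /\ forall x, x \in M -> 0 <= x < pi.

Definition max_impossible (lam : R) (M1 M2 M3 : seq R) : Prop :=
  forall C0, C0 \in M3 -> forall z : bool,
    (forall A, A \in M1 -> exists B, B \in M2 /\
        exists a b, impossible (Bstate lam) A B C0 a b z) /\
    (forall B, B \in M2 -> exists A, A \in M1 /\
        exists a b, impossible (Bstate lam) A B C0 a b z).

(** coefficient matrix over Z_2 of Psi_0(z0) u Psi_1(z1): unknowns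
    a_0..a_{N-1}, b_0..b_{N-1}; the equation a_j + b_{K_l(j)} = r gives the row
    e_{a_j} + e_{b_{K_l(j)}} *)
Definition coefmx (N : nat) (K0 K1 : 'I_N -> 'I_N) : 'M['F_2]_(N + N, N + N) :=
  \matrix_(i < N + N, c < N + N)
    match split i with
    | inl j => ((c == lshift N j) : nat)%:R + ((c == rshift N (K0 j)) : nat)%:R
    | inr j => ((c == lshift N j) : nat)%:R + ((c == rshift N (K1 j)) : nat)%:R
    end.

(** maximal rank (n = 2): for all z0, z1, with K(j,l,z) the unique k such that
    A_j + B_k - beta(l, C_l + z pi) is a multiple of pi, the coefficient matrix
    of Psi_0(z0) u Psi_1(z1) has rank 2N - 1 *)
Definition max_rank (lam : R) (N : nat) (A B : 'I_N -> R) (C0 C1 : R) : Prop :=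
  forall (z0 z1 : bool) (K0 K1 : 'I_N -> 'I_N),
    (forall j, int_mul_pi (A j + B (K0 j) - beta lam (C0 + z0%:R * pi))) ->
    (forall j, int_mul_pi (A j + B (K1 j) - beta lam (C1 + z1%:R * pi))) ->
    \rank (coefmx K0 K1) = (2 * N - 1)%N.

Definition N_regular (lam : R) (N : nat) (M1 M2 M3 : seq R) : Prop :=
  [/\ scenario M1, scenario M2 & scenario M3] /\
  [/\ size M1 = N, size M2 = N & size M3 = 2%N] /\
  max_impossible lam M1 M2 M3 /\
  max_rank lam (fun j : 'I_N => nth 0 M1 j) (fun k : 'I_N => nth 0 M2 k)
           (nth 0 M3 0) (nth 0 M3 1).

Definition apply_lu (U : 'I_3 -> 'M[C]_2) (psi : state) : state := fun f =>
  \sum_(g : {ffun 'I_3 -> 'I_2}) (\prod_(i < 3) U i (f i) (g i)) * psi g.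

(** relabelling of qubits: new qubit i is old qubit s i *)
Definition perm_state (s : 'S_3) (psi : state) : state := fun f =>
  psi [ffun j => f ((s^-1)%g j)].

Definition equivalent (psi : state) (M : 'I_3 -> seq R)
                      (psi' : state) (M' : 'I_3 -> seq R) : Prop :=
  exists (s : 'S_3) (U : 'I_3 -> 'M[C]_2),
    (forall i, unitary (U i)) /\
    (forall f, apply_lu U (perm_state s psi) f = psi' f) /\
    (forall i x, x \in M' i <->
       exists phi, phi \in M (s i) /\
       exists phi', x = modpi phi' /\
         (U i *m Emx phi *m adjmx (U i) = Emx phi' \/
          U i *m Emx phi *m adjmx (U i) = - Emx phi')).

Definition scen3 (M1 M2 M3 : seq R) : 'I_3 -> seq R :=
  fun i => if val i == 0%N then M1 else if val i == 1%N then M2 else M3.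

End Defs.

(* If the event (A, B, C) -> (a, b, c) is impossible for |B(lambda)>, the vanishing
   amplitude says e^{i(A + B + (a + b) pi - C')} w = - conj w, where C' = C + c pi and
   w = sin(lambda/2) + cos(lambda/2) e^{iC'} is nonzero because lambda < pi/2; hence
   A + B = beta(lambda, C') modulo pi.  Maximal impossibility thus gives, for the two
   settings C_0 and C_1, maps K_0 and K_1 with A_j + B_{K_l j} = beta_l modulo pi, injective
   because the A_j are distinct points of [0, pi).  The permutation tau = K_1^{-1} o K_0
   shifts A by beta_1 - beta_0 modulo pi.  A proper tau-orbit would yield a solution of the
   homogeneous system Psi_0 u Psi_1 independent of the all-ones vector, against rank 2N - 1.
   So tau is an N-cycle, N (beta_1 - beta_0) = 0 modulo pi, and all A_j, hence all
   B_k = beta_0 - A_j, lie in a single coset of (pi/N)Z; N distinct such points of [0, pi)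
   are c + k pi/N, k < N.  Finally the phase gates diag(1, e^{-ic}) and diag(1, e^{ic}) on
   the first two qubits fix |B(lambda)> and shift their measurement angles by -c and c. *)

From HB Require Import structures.
From mathcomp Require Import all_boot all_order all_algebra all_fingroup.
From mathcomp Require Import reals trigo.
From mathcomp Require Import complex.
From mathcomp Require Import ring lra zify.
Import Order.TTheory GRing.Theory Num.Theory.
Local Open Scope ring_scope.

Set Implicit Arguments.
Unset Strict Implicit.
Unset Printing Implicit Defensive.

Section IntegerMultiples.
Variable R : realType.
Implicit Types u x y : R.

(* [int_mul pi] is convertible to [int_mul_pi]. *)
Definition int_mul u x : Prop := exists k : int, x = k%:~R * u.

Lemma int_mul0 u : int_mul u 0.
Proof. by exists 0; rewrite mul0r. Qed.

Lemma int_mulD u x y : int_mul u x -> int_mul u y -> int_mul u (x + y).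
Proof. by move=> [k ->] [l ->]; exists (k + l); rewrite intrD mulrDl. Qed.

Lemma int_mulN u x : int_mul u x -> int_mul u (- x).
Proof. by move=> [k ->]; exists (- k); rewrite intrN mulNr. Qed.

Lemma int_mulB u x y : int_mul u x -> int_mul u y -> int_mul u (x - y).
Proof. by move=> hx /int_mulN; apply: int_mulD. Qed.

Lemma int_mul_natl u (n : nat) x : int_mul u x -> int_mul u (n%:R * x).
Proof. by move=> [k ->]; exists (n%:Z * k); rewrite intrM mulrA. Qed.

Lemma int_mul_nat u (n : nat) : int_mul u (n%:R * u).
Proof. by exists n; rewrite -pmulrn. Qed.

Lemma int_mul_divn u (N : nat) x : (0 < N)%N -> int_mul u x -> int_mul (u / N%:R) x.
Proof.
move=> N0 [k ->]; exists (k * N%:Z); rewrite intrM -[(N%:Z)%:~R]/(N%:R : R).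
by field; rewrite pnatr_eq0 -lt0n.
Qed.

Lemma int_mul_small u x : 0 < u -> - u < x < u -> int_mul u x -> x = 0.
Proof.
move=> u0 /andP[x1 x2] [k hk]; rewrite hk in x1 x2 *.
have k1 : (k < 1)%R by rewrite -(ltr_int R) -(ltr_pM2r u0) mul1r.
have k2 : (-1 < k)%R by rewrite -(ltr_int R) -(ltr_pM2r u0) mulN1r.
have -> : k = 0 by lia.
by rewrite mul0r.
Qed.

Lemma int_mul_range_eq u x y : 0 < u -> 0 <= x < u -> 0 <= y < u ->
  int_mul u (x - y) -> x = y.
Proof.
move=> u0 /andP[x0 x1] /andP[y0 y1] /(int_mul_small u0) xy0; apply/eqP; rewrite -subr_eq0.
by apply/eqP/xy0/andP; split; lra.
Qed.

Lemma floor_mod_range u x : 0 < u -> 0 <= x - (Num.floor (x / u))%:~R * u < u.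
Proof.
move=> u0; have /andP[f1 f2] := floor_itv (x / u).
rewrite subr_ge0 -ler_pdivlMr // f1 /=.
have : x < ((Num.floor (x / u))%:~R + 1) * u by rewrite -ltr_pdivrMr // -(intrD _ _ 1).
lra.
Qed.

Lemma int_mul_floor u x : 0 < u -> exists2 c, 0 <= c < u & int_mul u (x - c).
Proof.
move=> u0; exists (x - (Num.floor (x / u))%:~R * u); first exact: floor_mod_range.
by exists (Num.floor (x / u)); rewrite opprB addrC subrK.
Qed.

End IntegerMultiples.

Section AnglesModPi.
Variable R : realType.
Implicit Types x y : R.

Lemma modpi_ge0_ltpi x : 0 <= modpi x < pi.
Proof. exact/floor_mod_range/pi_gt0. Qed.

Lemma int_mul_pi_subr_modpi x : int_mul pi (x - modpi x).
Proof. by exists (Num.floor (x / pi)); rewrite /modpi opprB addrC subrK. Qed.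

Lemma modpi_eq x y : int_mul pi (x - y) -> modpi x = modpi y.
Proof.
move=> hxy; apply: (int_mul_range_eq (@pi_gt0 R)); rewrite ?modpi_ge0_ltpi //.
have -> : modpi x - modpi y = (x - y) - (x - modpi x) + (y - modpi y) by ring.
apply: int_mulD; last exact: int_mul_pi_subr_modpi.
by apply: int_mulB; last exact: int_mul_pi_subr_modpi.
Qed.

Lemma modpi_id x : 0 <= x < pi -> modpi x = x.
Proof.
move=> hx; apply: (int_mul_range_eq (@pi_gt0 R)); rewrite ?modpi_ge0_ltpi //.
by rewrite -opprB; apply/int_mulN/int_mul_pi_subr_modpi.
Qed.

Lemma sin_addr_int_mul_pi_sqr x (k : int) : sin (x + k%:~R * pi) ^+ 2 = sin x ^+ 2.
Proof.
have sinDnpi (n : nat) y : sin (y + n%:R * pi) ^+ 2 = sin y ^+ 2.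
  by rewrite mulr_natl (alternatingn (@sinDpi R)) exprMn sqrr_sign mul1r.
case: k => n; first by rewrite -pmulrn sinDnpi.
by rewrite NegzE intrN mulNr -(sinDnpi n.+1) subrK.
Qed.

Lemma sin_eq0_int_mul_pi x : sin x = 0 -> int_mul pi x.
Proof.
move=> sx0; have /andP[y0 y1] := modpi_ge0_ltpi x.
have [k xE] := int_mul_pi_subr_modpi x.
have sy0 : sin (modpi x) = 0.
  apply/eqP; rewrite -sqrf_eq0 -(sin_addr_int_mul_pi_sqr _ k) -xE.
  by rewrite subrKC sx0 expr0n.
have y00 : modpi x = 0.
  case: (ltrgtP (modpi x) 0) => // [yn|yp]; first lra.
  by have := @sin_gt0_pi R (modpi x); rewrite yp y1 sy0 ltxx => /(_ isT).
by exists k; rewrite -xE y00 subr0.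
Qed.

End AnglesModPi.

Section SmallOrdinals.
Variables (T : Type) (idx : T) (op : Monoid.law idx).

Lemma ord2P (x : 'I_2) : x = ord0 \/ x = ord_max.
Proof. by case: x => [[|[|//]] p]; [left|right]; apply/val_inj. Qed.

Lemma inord3E : [/\ inord 0 = ord0 :> 'I_3, inord 1 = lift ord0 ord0 :> 'I_3
                  & inord 2 = lift ord0 (lift ord0 ord0) :> 'I_3].
Proof. by split; apply/val_inj; rewrite /= inordK. Qed.

Lemma big_ord2 (F : 'I_2 -> T) : \big[op/idx]_(i < 2) F i = op (F ord0) (F ord_max).
Proof. by rewrite !big_ord_recl big_ord0 Monoid.mulm1; congr (op _ (F _)); apply/val_inj. Qed.

Lemma big_ord3 (F : 'I_3 -> T) : \big[op/idx]_(i < 3) F i =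
  op (op (F ord0) (F (lift ord0 ord0))) (F (lift ord0 (lift ord0 ord0))).
Proof. by rewrite !big_ord_recl big_ord0 Monoid.mulm1 Monoid.mulmA. Qed.

End SmallOrdinals.

Section Amplitude.
Variable R : realType.
Local Notation C := (R[i]).
Implicit Types (p q : R) (x : 'I_2).

Lemma expiD p q : expi p * expi q = expi (p + q).
Proof. by rewrite /expi; simpc; rewrite cosD sinD; congr Complex; ring. Qed.

Lemma expi0 : expi 0 = 1 :> C.
Proof. by rewrite /expi cos0 sin0. Qed.

Lemma expi_neq0 p : expi p != 0.
Proof.
apply/eqP => e0; have := expiD p (- p).
by rewrite e0 mul0r subrr expi0 => /esym/eqP; rewrite oner_eq0.
Qed.

Lemma expiN p : expi (- p) = (expi p)^-1.
Proof. by rewrite -[LHS](mulKf (expi_neq0 p)) expiD subrr expi0 mulr1. Qed.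

Definition prod_state (phi : 'I_3 -> 'I_2 -> C) : state R :=
  fun f => \prod_i phi i (f i).

Lemma ampl_prod_state phi ang out :
  ampl (prod_state phi) ang out =
  \prod_i \sum_x conjc (ket (ang i + (out i)%:R * pi) x) * phi i x.
Proof. by rewrite bigA_distr_bigA; apply: eq_bigr => f _; rewrite -big_split. Qed.

Definition basis_ket (b x : 'I_2) : C := (x == b)%:R.

Definition Bterm (b : 'I_2) (w : 'I_2 -> C) (i : 'I_3) : 'I_2 -> C :=
  if val i == 2%N then w else basis_ket b.

Lemma Bstate_prod lam f :
  Bstate lam f = 1 / sqrt2C R *
    (prod_state (Bterm ord0 (vl lam)) f + prod_state (Bterm ord_max (wl lam)) f).
Proof.
rewrite /Bstate /prod_state !big_ord3; case: inord3E => -> -> ->.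
rewrite /Bterm /basis_ket /=.
by case: (ord2P (f ord0)) => ->; case: (ord2P (f (lift ord0 ord0))) => ->;
  rewrite /= ?mulr0 ?mul0r ?mulr1 ?mul1r ?addr0 ?add0r.
Qed.

Lemma conj_ket p x :
  conjc (ket p x) = 1 / sqrt2C R * (if x == ord0 then 1 else expi (- p)).
Proof.
rewrite /ket /sqrt2C !mul1r -fmorphV; move: (Num.sqrt 2 : R)^-1 => k.
by case: (x == ord0); rewrite /expi /= ?cosN ?sinN; congr Complex; ring.
Qed.

Lemma ampl_Bstate (lam A B C0 : R) (a b c : bool) :
  let cs := cos (lam / 2) in let sn := sin (lam / 2) in
  let g := C0 + c%:R * pi in
  ampl (Bstate lam) (angs A B C0) (outs a b c) =
  (1 / sqrt2C R) ^+ 4 *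
  (cs%:C + sn%:C * expi (- g) +
   expi (- (A + a%:R * pi)) * expi (- (B + b%:R * pi)) * (sn%:C + cs%:C * expi (- g)))%C.
Proof.
move=> cs sn g.
have -> : ampl (Bstate lam) (angs A B C0) (outs a b c) = 1 / sqrt2C R *
    (ampl (prod_state (Bterm ord0 (vl lam))) (angs A B C0) (outs a b c) +
     ampl (prod_state (Bterm ord_max (wl lam))) (angs A B C0) (outs a b c)).
  rewrite /ampl -big_split mulr_sumr; apply: eq_bigr => f _ /=.
  by rewrite Bstate_prod; ring.
rewrite !ampl_prod_state !big_ord3 !big_ord2 !conj_ket.
move: (1 / sqrt2C R) (expi (- g)) => k e.
rewrite /Bterm /basis_ket /angs /outs /vl /wl /= -/cs -/sn -/g.
ring.
Qed.

Lemma sqrt2C_inv_neq0 : 1 / sqrt2C R != 0.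
Proof.
by rewrite mul1r invr_eq0 /sqrt2C -complexr0 eq_complex /= sqrtr_eq0 negb_and -ltNge ltr0n.
Qed.

Lemma impossible_Bstate_rot (lam A B C0 : R) (a b c : bool) :
  let cs := cos (lam / 2) in let sn := sin (lam / 2) in
  let g := C0 + c%:R * pi in
  let x := (A + a%:R * pi) + (B + b%:R * pi) - g in
  let D := sn + cs * cos g in let E := cs * sin g in
  impossible (Bstate lam) A B C0 a b c ->
  cos x * D - sin x * E = - D /\ sin x * D + cos x * E = E.
Proof.
move=> cs sn g x D E; rewrite /impossible ampl_Bstate -/cs -/sn -/g.
move/eqP; rewrite mulf_eq0 expf_eq0 (negbTE sqrt2C_inv_neq0) andbF /= => /eqP amp0.
have wE : Complex D E = (sn%:C + cs%:C * expi g)%C.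
  by rewrite /expi -!complexr0; simpc; congr Complex; rewrite /D /E; ring.
have wcE : Complex D (- E) = (sn%:C + cs%:C * expi (- g))%C.
  by rewrite /expi cosN sinN -!complexr0; simpc; congr Complex; rewrite /D /E; ring.
have : expi x * Complex D E + Complex D (- E) = 0.
  have -> : expi x = expi (A + a%:R * pi) * expi (B + b%:R * pi) * expi (- g).
    by rewrite !expiD.
  rewrite wE wcE -[RHS](mulr0 (expi (A + a%:R * pi) * expi (B + b%:R * pi))) -amp0 !expiN.
  by field; rewrite !expi_neq0.
simpc => -[h1 h2]; rewrite /D /E in h1 h2 *; split; lra.
Qed.

End Amplitude.

Section Beta.
Variable R : realType.
Implicit Types x a t D E : R.

(* If [e^{ix} (D + iE) = -(D - iE)] and [a] is an argument of [D + iE] modulo [pi],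
   then [x + 2a] is a multiple of [pi]. *)
Lemma sin_add_twice_arg x a D E : D ^+ 2 + E ^+ 2 != 0 -> D * sin a = E * cos a ->
  cos x * D - sin x * E = - D -> sin x * D + cos x * E = E -> sin (x + 2 * a) = 0.
Proof.
move=> Q0 hDE h1 h2.
have cQ : cos x * (D ^+ 2 + E ^+ 2) = E ^+ 2 - D ^+ 2.
  transitivity ((cos x * D - sin x * E) * D + (sin x * D + cos x * E) * E); first by ring.
  by rewrite h1 h2; ring.
have sQ : sin x * (D ^+ 2 + E ^+ 2) = 2 * D * E.
  transitivity ((sin x * D + cos x * E) * D - (cos x * D - sin x * E) * E); first by ring.
  by rewrite h1 h2; ring.
apply: (mulIf Q0); rewrite mul0r (_ : x + 2 * a = x + (a + a)); last by ring.
rewrite sinD cosD sinD.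
have -> : (sin x * (cos a * cos a - sin a * sin a) + cos x * (sin a * cos a + cos a * sin a))
    * (D ^+ 2 + E ^+ 2) = sin x * (D ^+ 2 + E ^+ 2) * (cos a ^+ 2 - sin a ^+ 2)
    + cos x * (D ^+ 2 + E ^+ 2) * (2 * sin a * cos a) by ring.
rewrite sQ cQ.
have -> : 2 * D * E * (cos a ^+ 2 - sin a ^+ 2) + (E ^+ 2 - D ^+ 2) * (2 * sin a * cos a)
    = 2 * (D * cos a + E * sin a) * (E * cos a - D * sin a) by ring.
by rewrite hDE subrr mulr0.
Qed.

Lemma sin_atan t : sin (atan t) = t * cos (atan t).
Proof.
have ca0 : cos (atan t) != 0.
  by rewrite cos_atan invr_eq0 gt_eqF // sqrtr_gt0 ltr_pwDl // sqr_ge0.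
by rewrite -[X in X * cos _](atanK t) /tan mulfVK.
Qed.

Lemma norm_sum_gt0 (s c g : R) : 0 <= s < c -> 0 < (s + c * cos g) ^+ 2 + (c * sin g) ^+ 2.
Proof.
move=> /andP[s0 sc].
have -> : (s + c * cos g) ^+ 2 + (c * sin g) ^+ 2 =
    (c - s) ^+ 2 + 2 * (s * c * (1 + cos g)) + c ^+ 2 * (cos g ^+ 2 + sin g ^+ 2 - 1).
  by ring.
rewrite cos2Dsin2 subrr mulr0 addr0.
have : 0 <= s * c * (1 + cos g) by rewrite !mulr_ge0 //; [lra | have := cos_geN1 g; lra].
have : 0 < (c - s) ^+ 2 by rewrite exprn_gt0 // subr_gt0.
lra.
Qed.

Lemma sin_lt_cos_half (lam : R) : 0 <= lam < pi / 2 -> 0 <= sin (lam / 2) < cos (lam / 2).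
Proof.
move=> /andP[l0 l1]; have pi0 := @pi_gt0 R.
have s0 : 0 <= sin (lam / 2) by apply: sin_ge0_pi; apply/andP; split; lra.
have c0 : 0 < cos (lam / 2) by apply: cos_gt0_pihalf; apply/andP; split; lra.
have : 0 < cos lam by apply: cos_gt0_pihalf; apply/andP; split; lra.
rewrite [X in cos X](splitr lam) cosD s0 /=; nra.
Qed.

Lemma impossible_Bstate_int_mul_pi (lam A B C0 : R) (a b c : bool) : 0 <= lam < pi / 2 ->
  impossible (Bstate lam) A B C0 a b c -> int_mul pi (A + B - beta lam (C0 + c%:R * pi)).
Proof.
move=> hlam /impossible_Bstate_rot.
set g := C0 + c%:R * pi; set th := A + a%:R * pi + (B + b%:R * pi).
set D := _ + _ * cos g; set E := _ * sin g => -[h1 h2].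
have Q0 : D ^+ 2 + E ^+ 2 != 0 by rewrite gt_eqF // norm_sum_gt0 // sin_lt_cos_half.
suff /sin_eq0_int_mul_pi : sin (th - beta lam g) = 0.
  have -> : A + B - beta lam g = th - beta lam g - a%:R * pi - b%:R * pi by rewrite /th; ring.
  by move=> hth; apply: int_mulB; [apply: int_mulB|]; try apply: int_mul_nat.
rewrite /beta -/D -/E; case: eqP => D0.
  rewrite (_ : th - (g - pi) = th - g + 2 * (pi / 2)); last by field.
  by apply: (sin_add_twice_arg Q0) => //; rewrite cos_pihalf D0 !mul0r mulr0.
rewrite (_ : th - (g - 2 * atan (E / D)) = th - g + 2 * atan (E / D)); last by ring.
by apply: (sin_add_twice_arg Q0) => //; rewrite sin_atan mulrA [D * _]mulrC divfK //; apply/eqP.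
Qed.

End Beta.

Section CoefficientMatrix.
Variables (N : nat) (K0 K1 : 'I_N -> 'I_N).

Lemma F2_addrr (x : 'F_2) : x + x = 0.
Proof. by rewrite -mulr2n -mulr_natr (@pchar_Fp_0 2) // mulr0. Qed.

Lemma sum_mul_eqb (v : 'I_(N + N) -> 'F_2) (a : 'I_(N + N)) :
  \sum_c v c * (c == a)%:R = v a.
Proof. by rewrite (bigD1 a) //= eqxx mulr1 big1 ?addr0 // => c /negbTE ->; rewrite mulr0. Qed.

Lemma coefmx_kernel (v : 'rV['F_2]_(N + N)) :
  (forall j, v 0 (lshift N j) = v 0 (rshift N (K0 j))) ->
  (forall j, v 0 (lshift N j) = v 0 (rshift N (K1 j))) ->
  v *m (coefmx K0 K1)^T = 0.
Proof.
move=> h0 h1; apply/rowP => i; rewrite !mxE.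
under eq_bigr do rewrite !mxE.
case: splitP => j _; under eq_bigr do rewrite mulrDr.
  by rewrite big_split /= !sum_mul_eqb h0 F2_addrr.
by rewrite big_split /= !sum_mul_eqb h1 F2_addrr.
Qed.

(* The all-ones vector and the indicator of [S] (on the [a_j] and on the
   [b_{K1 j}]) are independent solutions of the homogeneous system. *)
Lemma rank_coefmx_le (sg : 'I_N -> 'I_N) (S : pred 'I_N) (j0 j1 : 'I_N) :
  cancel K1 sg -> (forall j, S (sg (K0 j)) = S j) -> S j0 -> ~~ S j1 ->
  (\rank (coefmx K0 K1) <= (N + N) - 2)%N.
Proof.
move=> K1K hS Sj0 Sj1.
pose w := \row_(c < N + N)
  ((match split c with inl j => S j | inr k => S (sg k) end : nat)%:R : 'F_2).
pose u := \row_(c < N + N) (1 : 'F_2).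
have splitl (j : 'I_N) : split (lshift N j) = inl j by exact: (unsplitK (inl j)).
have splitr (k : 'I_N) : split (rshift N k) = inr k by exact: (unsplitK (inr k)).
have wker : (w <= kermx (coefmx K0 K1)^T)%MS.
  by apply/sub_kermxP; apply: coefmx_kernel => j; rewrite !mxE splitl splitr ?hS ?K1K.
have uker : (u <= kermx (coefmx K0 K1)^T)%MS.
  by apply/sub_kermxP; apply: coefmx_kernel => j; rewrite !mxE.
have rank_u : \rank u = 1%N.
  apply/eqP; rewrite eqn_leq rank_leq_row lt0n mxrank_eq0.
  by apply/eqP => /rowP /(_ (lshift N j0)) /eqP; rewrite !mxE oner_eq0.
have u_ltuw : (u < u + w)%MS.
  rewrite ltmxE addsmxSl /=; apply/negP => /(submx_trans (addsmxSr u w)) /sub_rVP[a wa].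
  have := congr1 (fun M : 'rV_(N + N) => M 0 (lshift N j1)) wa.
  have := congr1 (fun M : 'rV_(N + N) => M 0 (lshift N j0)) wa.
  rewrite /= !mxE !splitl Sj0 (negbTE Sj1) /= mulr1 => <- /eqP.
  by rewrite eq_sym oner_eq0.
have uw_ker : (u + w <= kermx (coefmx K0 K1)^T)%MS by rewrite addsmx_sub uker wker.
have := mxrankS uw_ker; rewrite mxrank_ker mxrank_tr.
by have := rank_ltmx u_ltuw; rewrite rank_u; lia.
Qed.

End CoefficientMatrix.

Section Matchings.
Variables (R : realType) (N : nat) (A B : 'I_N -> R) (K0 K1 : 'I_N -> 'I_N) (b0 b1 : R).
Hypotheses (A_range : forall j, 0 <= A j < pi) (A_inj : injective A).
Hypothesis K0_match : forall j, int_mul pi (A j + B (K0 j) - b0).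
Hypothesis K1_match : forall j, int_mul pi (A j + B (K1 j) - b1).
Hypothesis rank_coefmx : \rank (coefmx K0 K1) = (2 * N - 1)%N.

Lemma matching_inj K b : (forall j, int_mul pi (A j + B (K j) - b)) -> injective K.
Proof.
move=> hK j j' eK; apply/A_inj/(int_mul_range_eq (@pi_gt0 R)); rewrite ?A_range //.
have -> : A j - A j' = (A j + B (K j) - b) - (A j' + B (K j') - b) by rewrite eK; ring.
exact: int_mulB.
Qed.

Let K0_inj := matching_inj K0_match.
Let K1_inj := matching_inj K1_match.

Definition tau j := invF K1_inj (K0 j).

Lemma tau_inj : injective tau.
Proof. by move=> j j' /(congr1 K1); rewrite !f_invF => /K0_inj. Qed.

Lemma tau_shift j : int_mul pi (A (tau j) - A j - (b1 - b0)).
Proof.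
have := K1_match (tau j); rewrite f_invF => h1.
have -> : A (tau j) - A j - (b1 - b0) =
  (A (tau j) + B (K0 j) - b1) - (A j + B (K0 j) - b0) by ring.
exact: int_mulB.
Qed.

Lemma tau_iter_shift j0 k :
  int_mul pi (A (iter k tau j0) - A j0 - k%:R * (b1 - b0)).
Proof.
elim: k => [|k IHk]; first by rewrite mul0r !subrr; apply: int_mul0.
have -> : A (iter k.+1 tau j0) - A j0 - k.+1%:R * (b1 - b0) =
  (A (tau (iter k tau j0)) - A (iter k tau j0) - (b1 - b0)) +
  (A (iter k tau j0) - A j0 - k%:R * (b1 - b0)) by rewrite /= -addn1 natrD; ring.
exact/int_mulD/IHk/tau_shift.
Qed.

Lemma tau_connect j0 j : fconnect tau j0 j.
Proof.
apply/negPn/negP => hj.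
have := @rank_coefmx_le N K0 K1 (invF K1_inj) (fconnect tau j0) j0 j (invF_f K1_inj)
  (fun j => esym (same_fconnect1_r tau_inj j0 j)) (connect0 _ j0) hj.
by rewrite rank_coefmx; have := ltn_ord j0; lia.
Qed.

Lemma order_tau j0 : fingraph.order tau j0 = N.
Proof.
by rewrite /order -[RHS]card_ord; apply: eq_card => j; rewrite inE tau_connect.
Qed.

Lemma shift_int_mul (j0 : 'I_N) : int_mul (pi / N%:R) (b1 - b0).
Proof.
have N0 : (N%:R : R) != 0 by rewrite pnatr_eq0 -lt0n (leq_ltn_trans _ (ltn_ord j0)).
have := tau_iter_shift j0 (fingraph.order tau j0).
rewrite (iter_order tau_inj) order_tau subrr add0r => /int_mulN[k]; rewrite opprK => hk.
by exists k; apply: (mulfI N0); rewrite hk; field.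
Qed.

Lemma A_int_mul j0 j : int_mul (pi / N%:R) (A j - A j0).
Proof.
have N0 : (0 < N)%N by apply: leq_ltn_trans (ltn_ord j0).
rewrite -(iter_findex (tau_connect j0 j)); set k := findex tau j0 j.
have -> : A (iter k tau j0) - A j0 =
  (A (iter k tau j0) - A j0 - k%:R * (b1 - b0)) + k%:R * (b1 - b0) by ring.
by apply: int_mulD; [apply/int_mul_divn/tau_iter_shift | apply/int_mul_natl/shift_int_mul].
Qed.

Lemma B_int_mul j0 k : int_mul (pi / N%:R) (B k - (b0 - A j0)).
Proof.
have N0 : (0 < N)%N by apply: leq_ltn_trans (ltn_ord j0).
rewrite -(f_invF K0_inj k); set j := invF K0_inj k.
have -> : B (K0 j) - (b0 - A j0) = (A j + B (K0 j) - b0) - (A j - A j0) by ring.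
by apply: int_mulB; [apply/int_mul_divn | apply: A_int_mul].
Qed.

End Matchings.

Section GridSequences.
Variables (R : realType) (N : nat).
Hypothesis N_gt0 : (0 < N)%N.

Definition grid_seq (c : R) : seq R := [seq c + k%:R * (pi / N%:R) | k <- iota 0 N].

Lemma step_gt0 : 0 < pi / N%:R :> R.
Proof. by rewrite divr_gt0 ?pi_gt0 ?ltr0n. Qed.

Lemma pi_step : pi = N%:R * (pi / N%:R) :> R.
Proof. by rewrite mulrCA divff ?mulr1 // pnatr_eq0 -lt0n. Qed.

Lemma nth_grid_seq c i : (i < N)%N -> nth 0 (grid_seq c) i = c + i%:R * (pi / N%:R).
Proof. by move=> iN; rewrite (nth_map 0%N) ?size_iota // nth_iota. Qed.

Lemma grid_seq_step c i : (i.+1 < N)%N ->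
  nth 0 (grid_seq c) i.+1 - nth 0 (grid_seq c) i = pi / N%:R.
Proof. by move=> iN; rewrite !nth_grid_seq ?(ltnW iN) // mulrSr; ring. Qed.

Lemma grid_point_range k : (k < N)%N -> 0 <= k%:R * (@pi R / N%:R) < pi.
Proof.
move=> kN; rewrite mulr_ge0 ?ler0n ?(ltW step_gt0) //= [X in _ < X]pi_step.
by rewrite ltr_pM2r ?step_gt0 // ltr_nat.
Qed.

Lemma grid_seq_sorted c : sorted <%R (grid_seq c).
Proof.
apply: (homo_sorted (e := ltn)); last exact: iota_ltn_sorted.
by move=> x y xy; rewrite ltrD2l ltr_pM2r ?step_gt0 // ltr_nat.
Qed.

Lemma mem_grid_seq c y : 0 <= c < pi / N%:R -> 0 <= y < pi ->
  int_mul (pi / N%:R) (y - c) -> y \in grid_seq c.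
Proof.
move=> /andP[c0 c1] /andP[y0 y1] [n yE]; have u0 := step_gt0.
rewrite [pi]pi_step in y1.
have n1 : (-1 : R) < n%:~R by nra.
have n2 : n%:~R < (N%:R : R) by nra.
case: n yE n1 n2 => [k|k] yE n1 n2; last first.
  by move: n1; rewrite NegzE intrN ltrN2 -[1]/(1%:R : R) ltr_nat ltnS ltn0.
apply/mapP; exists k; last by rewrite -[y](subrK c) yE -pmulrn addrC.
by move: n2; rewrite -pmulrn ltr_nat mem_iota.
Qed.

Lemma eq_grid_seq (S : seq R) x0 : uniq S -> size S = N ->
  (forall y, y \in S -> 0 <= y < pi) ->
  (forall y, y \in S -> int_mul (pi / N%:R) (y - x0)) ->
  exists c, S =i grid_seq c /\ sort <=%R S = grid_seq c.
Proof.
move=> S_uniq S_size S_range S_grid.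
have [c c_range x0c] := int_mul_floor x0 step_gt0.
have sub : {subset S <= grid_seq c}.
  move=> y yS; apply: mem_grid_seq; rewrite ?S_range //.
  by rewrite -(subrKA x0); apply: int_mulD; [apply: S_grid|].
have size_le : (size (grid_seq c) <= size S)%N by rewrite size_map size_iota S_size.
have [_ eqS] := uniq_min_size S_uniq sub size_le.
exists c; split => //.
have lt_sorted := grid_seq_sorted c.
have grid_uniq : uniq (grid_seq c) by apply: (sorted_uniq lt_trans ltxx).
have perm : perm_eq S (grid_seq c) by apply: uniq_perm.
rewrite (perm_sortP le_total le_trans le_anti _ _ perm).
apply: sorted_sort; first exact: le_trans.
by apply: sub_sorted lt_sorted => x y /ltW.
Qed.

End GridSequences.

Section PhaseEquivalence.
Variable R : realType.
Local Notation C := (R[i]).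

Definition phase_mx (t : R) : 'M[C]_2 :=
  \matrix_(i, j) (if i == j then (if i == ord0 then 1 else expi t) else 0).

Lemma phase_mx_unitary (t : R) : unitary (phase_mx t).
Proof.
rewrite /unitary /adjmx; apply/matrixP => i k; rewrite !mxE big_ord2 !mxE.
case: (ord2P i) => ->; case: (ord2P k) => -> /=;
  rewrite ?oppr0 ?mul1r ?mulr1 ?mul0r ?mulr0 ?addr0 ?add0r //.
rewrite /expi -[1]/(Complex (1 : R) 0); simpc; have := cos2Dsin2 t; rewrite !expr2 => h.
by congr Complex; [rewrite -h|]; ring.
Qed.

Lemma phase_mx_conj (t p : R) : phase_mx t *m Emx p *m adjmx (phase_mx t) = Emx (p + t).
Proof.
apply/matrixP => i k; rewrite /adjmx !mxE big_ord2 !mxE !big_ord2 !mxE.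
case: (ord2P i) => ->; case: (ord2P k) => -> /=;
  rewrite ?oppr0 ?mul1r ?mulr1 ?mul0r ?mulr0 ?addr0 ?add0r //.
- by rewrite /expi; simpc; rewrite cosD sinD; congr Complex; ring.
- by rewrite expiD addrC.
- by rewrite mul0r.
Qed.

Lemma Emx_modpi (p q : R) : Emx p = Emx q \/ Emx p = - Emx q -> modpi p = modpi q.
Proof.
move=> pq; apply/modpi_eq/sin_eq0_int_mul_pi.
have : expi p = expi q \/ expi p = - expi q.
  by case: pq => e; [left|right]; have := congr1 (fun M : 'M[C]_2 => M ord_max ord0) e;
    rewrite !mxE.
rewrite sinB /expi => -[[-> ->]|[-> ->]]; ring.
Qed.

Definition phase_shift (t : R) (i : 'I_3) : R :=
  if val i == 0%N then - t else if val i == 1%N then t else 0.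

Lemma apply_lu_phase (s : 'I_3 -> R) psi f :
  apply_lu (fun i => phase_mx (s i)) psi f =
  (\prod_i (if f i == ord0 then 1 else expi (s i))) * psi f.
Proof.
rewrite /apply_lu (bigD1 f) //= [X in _ + X]big1 ?addr0; last first.
  move=> g gf; have /existsP[i fgi] : [exists i, f i != g i].
    apply: contraR gf; rewrite negb_exists => /forallP fg.
    by apply/eqP/ffunP => i; apply/eqP; move: (fg i); rewrite negbK eq_sym.
  by rewrite (bigD1 i) //= mxE (negbTE fgi) !mul0r.
by congr (_ * _); apply: eq_bigr => i _; rewrite mxE eqxx.
Qed.

Lemma perm_state1 (psi : state R) : perm_state 1 psi = psi.
Proof.
by apply/boolp.funext => f; rewrite /perm_state; congr psi; apply/ffunP => j;
  rewrite ffunE invg1 perm1.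
Qed.

Lemma Bstate_phase_invariant (lam t : R) f :
  apply_lu (fun i => phase_mx (phase_shift t i)) (perm_state 1 (Bstate lam)) f =
  Bstate lam f.
Proof.
rewrite perm_state1 apply_lu_phase big_ord3 /Bstate; case: inord3E => -> -> ->.
rewrite /phase_shift /=.
case: (ord2P (f ord0)) => ->; case: (ord2P (f (lift ord0 ord0))) => ->;
  case: (ord2P (f (lift ord0 (lift ord0 ord0)))) => -> /=;
  rewrite ?expi0 ?mul0r ?addr0 ?add0r ?mulr1 ?mul1r //;
  by rewrite ?mulr0 // expiD addNr expi0 mul1r.
Qed.

Lemma equivalent_Bstate_phase (lam t : R) (M M' : 'I_3 -> seq R) :
  (forall i x, x \in M' i <-> exists2 phi, phi \in M i & x = modpi (phi + phase_shift t i)) ->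
  equivalent (Bstate lam) M (Bstate lam) M'.
Proof.
move=> M'E; exists 1%g, (fun i => phase_mx (phase_shift t i)).
split; first by move=> i; apply: phase_mx_unitary.
split; first by move=> f; apply: Bstate_phase_invariant.
move=> i x; rewrite perm1 M'E; split.
  case=> phi Mphi ->; exists phi; split => //; exists (phi + phase_shift t i).
  by split => //; left; apply: phase_mx_conj.
case=> phi [Mphi [phi' [-> E]]]; exists phi => //; apply: Emx_modpi.
by rewrite phase_mx_conj in E; case: E => ->; [left | right; rewrite opprK].
Qed.

End PhaseEquivalence.

Lemma mem_nth_ord (T : eqType) (x0 : T) (s : seq T) N y :
  size s = N -> y \in s -> exists j : 'I_N, y = nth x0 s j.
Proof.
move=> s_size sy; have jN : (index y s < N)%N by rewrite -s_size index_mem.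
by exists (Ordinal jN); rewrite nth_index.
Qed.

Section Regular.
Variable R : realType.

Lemma equivalent_grid (lam : R) N (M1 M2 M3 : seq R) (c c' : R) :
  M1 =i grid_seq N c -> M2 =i grid_seq N c' ->
  exists mu : R, 0 <= mu < pi /\
     exists M3' : seq R,
       equivalent (Bstate lam) (scen3 M1 M2 M3) (Bstate lam)
         (scen3 [seq k%:R * pi / N%:R | k <- iota 0 N]
                [seq modpi (k%:R * pi / N%:R + mu) | k <- iota 0 N] M3').
Proof.
move=> M1E M2E; exists (modpi (c' + c)); split; first exact: modpi_ge0_ltpi.
exists [seq modpi (phi + 0) | phi <- M3]; apply: (@equivalent_Bstate_phase R lam c) => i x.
have iotaP k : reflect (k < N)%N (k \in iota 0 N) by rewrite mem_iota; apply: idP.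
case: i => [[|[|[|//]]] i3]; rewrite /scen3 /phase_shift /=.
- have modpiE k : (k < N)%N -> modpi (c + k%:R * (pi / N%:R) + - c) = k%:R * pi / N%:R.
    move=> kN; have N_gt0 : (0 < N)%N by apply: leq_ltn_trans kN.
    by rewrite addrC addKr -mulrA modpi_id // grid_point_range.
  split.
    case/mapP => k /iotaP kN ->; exists (c + k%:R * (pi / N%:R)); last by rewrite modpiE.
    by rewrite M1E; apply/mapP; exists k => //; apply/iotaP.
  case=> phi; rewrite M1E => /mapP[k /iotaP kN ->] ->.
  by apply/mapP; exists k; [apply/iotaP | rewrite modpiE].
- have modpiE k : modpi (k%:R * pi / N%:R + modpi (c' + c)) =
      modpi (c' + k%:R * (pi / N%:R) + c).
    apply: modpi_eq; rewrite -opprB; apply: int_mulN.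
    have -> : c' + k%:R * (pi / N%:R) + c - (k%:R * pi / N%:R + modpi (c' + c)) =
      c' + c - modpi (c' + c) by rewrite mulrA; ring.
    exact: int_mul_pi_subr_modpi.
  split.
    case/mapP => k /iotaP kN ->; exists (c' + k%:R * (pi / N%:R)); last exact: modpiE.
    by rewrite M2E; apply/mapP; exists k => //; apply/iotaP.
  case=> phi; rewrite M2E => /mapP[k /iotaP kN ->] ->.
  by apply/mapP; exists k; [apply/iotaP | rewrite modpiE].
- by split; [case/mapP => phi M3phi ->; exists phi | case=> phi M3phi ->; apply: map_f].
Qed.

Lemma max_impossible_matching (lam C0 : R) N (M1 M2 M3 : seq R) :
  0 <= lam < pi / 2 -> max_impossible lam M1 M2 M3 ->
  size M1 = N -> size M2 = N -> C0 \in M3 ->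
  exists K : 'I_N -> 'I_N, forall j : 'I_N,
    int_mul pi (nth 0 M1 j + nth 0 M2 (K j) - beta lam (C0 + false%:R * pi)).
Proof.
move=> hlam M_imp M1_size M2_size M3C0.
suff /fin_all_exists[K hK] : forall j : 'I_N, exists k : 'I_N,
    int_mul pi (nth 0 M1 j + nth 0 M2 k - beta lam (C0 + false%:R * pi)) by exists K.
move=> j; have jM1 : (j < size M1)%N by rewrite M1_size.
have [B' [M2B' [a [b imp]]]] := (M_imp C0 M3C0 false).1 _ (mem_nth 0 jM1).
have [k B'E] := mem_nth_ord 0 M2_size M2B'.
by exists k; rewrite -B'E; apply: impossible_Bstate_int_mul_pi imp.
Qed.

Lemma N_regular_grid_seq (lam : R) N (M1 M2 M3 : seq R) :
  0 <= lam < pi / 2 -> N_regular lam N M1 M2 M3 ->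
  exists c c', (M1 =i grid_seq N c /\ sort <=%R M1 = grid_seq N c) /\
               (M2 =i grid_seq N c' /\ sort <=%R M2 = grid_seq N c').
Proof.
move=> hlam [[[M1_uniq M1_range] [M2_uniq M2_range] _]].
move=> [[M1_size M2_size M3_size] [M_imp M_rank]].
case: (posnP N) => [N0 | N_gt0].
  move: M1_size M2_size; rewrite N0 => /size0nil -> /size0nil ->.
  by exists 0, 0.
have M3i i : (i < 2)%N -> nth 0 M3 i \in M3 by move=> i2; rewrite mem_nth ?M3_size.
have [K0 K0_match] := max_impossible_matching hlam M_imp M1_size M2_size (M3i 0%N isT).
have [K1 K1_match] := max_impossible_matching hlam M_imp M1_size M2_size (M3i 1%N isT).
have A_inj : injective (fun j : 'I_N => nth 0 M1 j).
  by move=> j j' /eqP; rewrite nth_uniq ?M1_size // => /eqP /val_inj.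
have A_range (j : 'I_N) : 0 <= nth 0 M1 j < pi by rewrite M1_range // mem_nth ?M1_size.
have rankK := M_rank false false K0 K1 K0_match K1_match.
pose B (k : 'I_N) := nth 0 M2 k; pose j0 : 'I_N := Ordinal N_gt0.
have [c M1E] : exists c, M1 =i grid_seq N c /\ sort <=%R M1 = grid_seq N c.
  apply: (eq_grid_seq N_gt0 M1_uniq M1_size M1_range (x0 := nth 0 M1 j0)) => y.
  case/(mem_nth_ord 0 M1_size) => j ->.
  exact: (A_int_mul (B := B) A_range A_inj K0_match K1_match rankK).
have [c' M2E] : exists c', M2 =i grid_seq N c' /\ sort <=%R M2 = grid_seq N c'.
  apply: (eq_grid_seq N_gt0 M2_uniq M2_size M2_range) => y.
  case/(mem_nth_ord 0 M2_size) => k ->.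
  exact: (B_int_mul (B := B) A_range A_inj K0_match K1_match rankK j0).
by exists c, c'.
Qed.

End Regular.

Unset Implicit Arguments.
Set Strict Implicit.

Theorem lemma22 (R : realType) (lam : R) (N : nat) (M1 M2 M3 : seq R) :
  0 <= lam < pi / 2 ->
  N_regular lam N M1 M2 M3 ->
  (* evenly spaced modulo pi, adjacent angles differing by pi / N *)
  (forall i : nat, (i.+1 < N)%N ->
     nth 0 (sort <=%R M1) i.+1 - nth 0 (sort <=%R M1) i = pi / N%:R) /\
  (forall i : nat, (i.+1 < N)%N ->
     nth 0 (sort <=%R M2) i.+1 - nth 0 (sort <=%R M2) i = pi / N%:R) /\
  (* hence, up to equivalence, M1 = {k pi / N}, M2 = {k pi / N + mu mod pi} *)
  (exists mu : R, 0 <= mu < pi /\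
     exists M3' : seq R,
       equivalent (Bstate lam) (scen3 M1 M2 M3) (Bstate lam)
         (scen3 [seq k%:R * pi / N%:R | k <- iota 0 N]
                [seq modpi (k%:R * pi / N%:R + mu) | k <- iota 0 N] M3')).
Proof.
move=> hlam reg; have [c [c' [[M1E M1_sort] [M2E M2_sort]]]] := N_regular_grid_seq hlam reg.
split; first by move=> i iN; rewrite M1_sort grid_seq_step.
split; first by move=> i iN; rewrite M2_sort grid_seq_step.
exact: equivalent_grid M1E M2E.
Qed.
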